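(* Consider one of the three families (bucket recursive trees, $(b,d)$-ary increasing trees, $(b,\alpha)$-PORTs) generated by the growth process. Let $j\ge1$ and $\ell\in\{1,\dots,b\}$ with $\mathbb P\{K_j=\ell\}>0$, and let $Y_{n,\ell,j}$ denote $Y_{n,j}$ conditioned on $K_j=\ell$, for $n\ge j$. For $i\ge j$ let $A_{i,\ell,j}$ be the indicator (under the same conditioning) that label $i$ is a descendant of label $j$. Then $A_{j,\ell,j}=1$, $$Y_{n,\ell,j}=\sum_{i=j}^nA_{i,\ell,j},$$ and for $i\ge j$, $$\mathbb P\{A_{i+1,\ell,j}=1\mid Y_{i,\ell,j}\}=\begin{cases}\frac{\ell-1+Y_{i,\ell,j}}{i},&\text{bucket recursive trees},\\ \frac{(d-1)(\ell-1+Y_{i,\ell,j})+1}{(d-1)i+1},&\text{$(b,d)$-ary increasing trees},\\ \frac{(\alpha+1)(\ell-1+Y_{i,\ell,j})-1}{(\alpha+1)i-1},&\text{$(b,\alpha)$-PORTs}.\end{cases}$$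
   Context: Fix $b\ge1$. A bucket tree is a rooted unordered tree whose nodes (''buckets'') $v$ contain $c(v)\in\{1,\dots,b\}$ labels (capacity); $v$ is saturated if $c(v)=b$, and every node with a child is saturated; $d^+(v)$ is its number of children; the size is the total number of labels. Growth process: start with a root bucket containing label 1; given the tree of size $n\ge1$, choose a node $v$ with probability $p(v)$; if $v$ is unsaturated, add label $n+1$ to $v$, otherwise attach to $v$ a new child bucket containing only $n+1$. Families: bucket recursive trees $p(v)=c(v)/n$; $(b,d)$-ary increasing trees ($d\ge2$ integer) $p(v)=\frac{(d-1)c(v)+1-d^+(v)}{(d-1)n+1}$; $(b,\alpha)$-plane oriented recursive trees, $(b,\alpha)$-PORTs ($\alpha>0$) $p(v)=\frac{d^+(v)+(\alpha+1)c(v)-1}{(\alpha+1)n-1}$ (capacities and out-degrees in the current tree of size $n$). $K_j$ is the capacity of the bucket containing label $j$ in the tree of size $j$ (its initial bucket size). $Y_{n,j}$ (number of descendants of label $j$) is the number of labels $\ge j$ contained in the subtree rooted at the bucket containing label $j$, in the tree of size $n$; a label $i\ge j$ is a descendant of $j$ if it is counted there. *)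

From mathcomp Require Import all_boot all_order all_algebra.
Set Implicit Arguments. Unset Strict Implicit. Unset Printing Implicit Defensive.
Import Order.TTheory GRing.Theory Num.Theory.
Local Open Scope ring_scope.

(* A bucket tree of size n is encoded as a list s of length n of pairs:
   entry number (i-1) describes label i: its first component is the id of
   the bucket containing label i, where a bucket is identified by the
   label that created it (its smallest label); its second component is
   the id of the parent bucket when label i created a new (non-root)
   bucket, and 0 otherwise.  The root bucket has id 1. *)
Definition btree := seq (nat * nat).

Definition bucket_of (s : btree) (i : nat) : nat := (nth (0%N, 0%N) s i.-1).1.
Definition parent (s : btree) (w : nat) : nat := (nth (0%N, 0%N) s w.-1).2.

(* nodes = buckets *)
Definition isnode (s : btree) (v : nat) : bool :=
  (0 < v <= size s)%N && (bucket_of s v == v).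
Definition cap (s : btree) (v : nat) : nat := count (fun p => p.1 == v) s.
(* out-degree d^+(v) (for v >= 1) *)
Definition outdeg (s : btree) (v : nat) : nat := count (fun p => p.2 == v) s.

Definition step (b : nat) (s : btree) (v : nat) : btree :=
  if (cap s v < b)%N then rcons s (v, 0%N) else rcons s ((size s).+1, v).

(* A history h is the sequence of chosen nodes; h_k is the node chosen in
   the tree of size k+1.  The tree of size (size h).+1 built from h: *)
Definition build (b : nat) (h : seq nat) : btree := foldl (step b) [:: (1%N, 0%N)] h.

Definition tree_at (b : nat) (h : seq nat) (n : nat) : btree := build b (take n.-1 h).

Definition anc (s : btree) (u w : nat) : bool :=
  has (fun k => iter k (parent s) w == u) (iota 0 (size s).+1).

Inductive tfamily (R : Type) :=
| BRT
| DARY of nat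
| PORT of R.
Arguments BRT {R}.

Definition tfamily_ok (R : realFieldType) (fam : tfamily R) : Prop :=
  match fam with
  | BRT => True
  | DARY d => (2 <= d)%N
  | PORT a => 0 < a
  end.

Definition pw (R : realFieldType) (fam : tfamily R) (s : btree) (v : nat) : R :=
  let n := size s in
  let c := cap s v in
  let o := outdeg s v in
  if isnode s v then
    match fam with
    | BRT => c%:R / n%:R
    | DARY d => ((d.-1 * c).+1%:R - o%:R) / ((d.-1 * n).+1)%:R
    | PORT a => (o%:R + (a + 1) * c%:R - 1) / ((a + 1) * n%:R - 1)
    end
  else 0.

Definition hprob (R : realFieldType) (b : nat) (fam : tfamily R) (h : seq nat) : R :=
  \prod_(k < size h) pw fam (build b (take k h)) (nth 0%N h k).

(* all candidate histories of length m (choices among ids 1..k+1 at step k);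
   non-node choices get probability 0 *)
Fixpoint hist (m : nat) : seq (seq nat) :=
  match m with
  | 0 => [:: [::]]
  | m'.+1 => [seq rcons h v | h <- hist m', v <- iota 1 m'.+1]
  end.

(* probability of an event about the first m steps (tree of size m+1) *)
Definition Pr (R : realFieldType) (b : nat) (fam : tfamily R) (m : nat)
  (E : pred (seq nat)) : R :=
  \sum_(h <- hist m) hprob b fam h * (E h)%:R.

Definition K (b : nat) (j : nat) (h : seq nat) : nat :=
  let s := tree_at b h j in cap s (bucket_of s j).

Definition Y (b : nat) (n j : nat) (h : seq nat) : nat :=
  let s := tree_at b h n in
  count (fun i => anc s (bucket_of s j) (bucket_of s i)) (iota j (n.+1 - j)).

Definition A (b : nat) (i j : nat) (h : seq nat) : nat :=
  let s := tree_at b h i in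
  ((j <= i)%N && anc s (bucket_of s j) (bucket_of s i) : nat).

Definition cond_formula (R : realFieldType) (fam : tfamily R) (l y i : nat) : R :=
  match fam with
  | BRT => (l.-1 + y)%:R / i%:R
  | DARY d => ((d.-1 * (l.-1 + y)).+1)%:R / ((d.-1 * i).+1)%:R
  | PORT a => ((a + 1) * (l.-1 + y)%:R - 1) / ((a + 1) * i%:R - 1)
  end.

From mathcomp Require Import all_boot all_order all_algebra.
From mathcomp Require Import zify ring lra.
Import Order.TTheory GRing.Theory Num.Theory.

Set Implicit Arguments. Unset Strict Implicit. Unset Printing Implicit Defensive.

(** Fix a history of positive probability up to size i and let B be the bucket
    of label j. Label i+1 descends from j exactly when the chosen node lies in
    the subtree of B. In each family p(v) is an affine function of c(v) and
    d^+(v) over a normalisation depending on i alone, and since a subtree has one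
    node more than it has internal edges, the out-degrees cancel when p is
    summed over the subtree of B: the probability only depends on the number of
    labels in that subtree. These labels are the Y_{i,j} labels >= j together
    with the l - 1 earlier labels of B itself, because an earlier label in a
    strictly lower bucket would mean that B was saturated before j arrived. *)

Section Growth.
Variable b : nat.

Definition new_entry (s : btree) (v : nat) : nat * nat :=
  if cap s v < b then (v, 0) else ((size s).+1, v).

Lemma stepE s v : step b s v = rcons s (new_entry s v).
Proof. by rewrite /step /new_entry; case: ifP. Qed.

Lemma build_rcons h v : build b (rcons h v) = step b (build b h) v.
Proof. by rewrite /build foldl_rcons. Qed.

Lemma size_build h : size (build b h) = (size h).+1.
Proof. by elim/last_ind: h => // h v IH; rewrite build_rcons stepE !size_rcons IH. Qed.

Lemma build_cat h1 h2 : exists t, build b (h1 ++ h2) = build b h1 ++ t.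
Proof.
elim/last_ind: h2 => [|h2 v [t IH]]; first by exists [::]; rewrite !cats0.
exists (rcons t (new_entry (build b (h1 ++ h2)) v)).
by rewrite -rcons_cat build_rcons stepE IH rcons_cat.
Qed.

Lemma take_build k h : k <= size h -> take k.+1 (build b h) = build b (take k h).
Proof.
move=> hk; have [t E] := build_cat (take k h) (drop k h).
rewrite cat_take_drop in E.
by rewrite E take_size_cat // size_build size_take_min (minn_idPl hk).
Qed.

Lemma hist_size m h : h \in hist m -> size h = m.
Proof.
elim: m h => [|m IH] h; first by rewrite inE => /eqP ->.
by move=> /allpairsPdep [h' [v [/IH hs _ ->]]]; rewrite size_rcons hs.
Qed.

Lemma hprob_rcons (R : realFieldType) (fam : tfamily R) h v :
  hprob b fam (rcons h v) = (hprob b fam h * pw fam (build b h) v)%R.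
Proof.
rewrite /hprob size_rcons big_ord_recr /= nth_rcons ltnn eqxx -cats1 take_size_cat //.
congr (_ * _)%R; apply: eq_bigr => k _.
by rewrite nth_cat (ltn_ord k) takel_cat // ltnW.
Qed.

Lemma Pr_rcons (R : realFieldType) (fam : tfamily R) m (E : pred (seq nat)) :
  Pr b fam m.+1 E =
  (\sum_(h <- hist m) hprob b fam h *
     \sum_(v <- iota 1 m.+1) pw fam (build b h) v * (E (rcons h v))%:R)%R.
Proof.
rewrite /Pr (_ : hist m.+1 = [seq rcons h v | h <- hist m, v <- iota 1 m.+1]) //.
rewrite big_allpairs_dep; apply: eq_bigr => h _.
by rewrite mulr_sumr; apply: eq_bigr => v _; rewrite hprob_rcons mulrA.
Qed.

End Growth.

Section Prefix.
Variables s t : btree.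

Lemma bucket_of_cat v : 0 < v <= size s -> bucket_of (s ++ t) v = bucket_of s v.
Proof. by move=> hv; rewrite /bucket_of nth_cat (_ : v.-1 < size s) //; lia. Qed.

Lemma isnode_cat v : isnode s v -> isnode (s ++ t) v.
Proof.
rewrite /isnode size_cat => /andP [hv /eqP hb].
by rewrite bucket_of_cat // hb eqxx andbT; lia.
Qed.

End Prefix.

Lemma bucket_of_take (s : btree) i k : 0 < k <= i -> bucket_of (take i s) k = bucket_of s k.
Proof. by move=> hk; rewrite /bucket_of nth_take //; lia. Qed.

Lemma isnode_take (s : btree) i v : isnode (take i s) v -> isnode s v.
Proof. by rewrite -{2}(cat_take_drop i s); apply: isnode_cat. Qed.

Lemma cap_take_mono (s : btree) i i' v : i <= i' -> cap (take i s) v <= cap (take i' s) v.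
Proof.
move=> hi; rewrite -(take_takel s hi) /cap -{2}(cat_take_drop i (take i' s)) count_cat.
exact: leq_addr.
Qed.

Section WellFormed.
Variable b : nat.

Definition wf_btree (s : btree) : Prop :=
  [/\ nth (0, 0) s 0 = (1, 0), 0 < size s &
      forall k, 0 < k < size s ->
        exists2 v, isnode (take k s) v & nth (0, 0) s k = new_entry b (take k s) v].

Lemma wf_btree_step s v : wf_btree s -> isnode s v -> wf_btree (step b s v).
Proof.
case=> h0 hs hk hv; rewrite stepE -cats1; split.
- by rewrite nth_cat hs; exact: h0.
- by rewrite size_cat; lia.
move=> k; rewrite size_cat addn1 => hk'; rewrite nth_cat.
case: (ltnP k (size s)) => hks.
  rewrite takel_cat; [apply: hk; lia | exact: ltnW].
have -> : k = size s by lia.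
rewrite subnn take_size_cat //; exists v => //.
Qed.

Lemma wf_btree_build (R : realFieldType) (fam : tfamily R) h :
  hprob b fam h != 0%R -> wf_btree (build b h).
Proof.
elim/last_ind: h => [|h v IH]; first by split => //= k; lia.
rewrite hprob_rcons mulf_eq0 negb_or build_rcons => /andP [/IH hwf hv].
by apply: wf_btree_step => //; apply: contraNT hv; rewrite /pw => /negbTE ->.
Qed.

Lemma wf_btree_take s i : wf_btree s -> 0 < i <= size s -> wf_btree (take i s).
Proof.
case=> h0 hs hk hi; split.
- by rewrite nth_take //; lia.
- by rewrite size_takel; lia.
- rewrite size_takel; last lia.
  move=> k hk'; rewrite nth_take ?take_takel; try lia.
  by apply: hk; lia.
Qed.

Section Tree.
Variable s : btree.
Hypothesis hwf : wf_btree s.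

Lemma bucket_of_root : bucket_of s 1 = 1.
Proof. by case: hwf => h0 _ _; rewrite /bucket_of h0. Qed.

Lemma parent0 : parent s 0 = 0.
Proof. by case: hwf => h0 _ _; rewrite /parent h0. Qed.

Lemma parent_root : parent s 1 = 0.
Proof. by case: hwf => h0 _ _; rewrite /parent h0. Qed.

Lemma isnode_root : isnode s 1.
Proof. by case: hwf => _ hs _; rewrite /isnode bucket_of_root eqxx andbT; lia. Qed.

Lemma entry_cases k : 2 <= k <= size s ->
  [/\ parent s k = 0, isnode (take k.-1 s) (bucket_of s k)
    & cap (take k.-1 s) (bucket_of s k) < b]
  \/ [/\ bucket_of s k = k, isnode (take k.-1 s) (parent s k)
    & b <= cap (take k.-1 s) (parent s k)].
Proof.
case: hwf => _ _ /(_ k.-1) hk /andP [hk2 hks].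
have [|v hv] := hk; first lia.
rewrite /bucket_of /parent /new_entry size_takel; last lia.
case: ifP => hc ->; [left|right]; split => //=; last by rewrite leqNgt hc.
lia.
Qed.

Lemma bucket_node k : 0 < k <= size s -> bucket_of s k <= k /\ isnode s (bucket_of s k).
Proof.
move=> hk; case: (ltnP k 2) => hk2.
  have -> : k = 1 by lia.
  by rewrite bucket_of_root; split => //; exact: isnode_root.
have [[_ hn _]|[hb _ _]] := entry_cases (k := k) ltac:(lia).
  have /andP [hr _] := hn; rewrite size_takel in hr; last lia.
  split; [lia | exact: isnode_take hn].
by rewrite hb /isnode hb eqxx andbT; split => //; lia.
Qed.

Lemma parent_le_pred w : parent s w <= w.-1.
Proof.
case: (ltnP (size s) w) => hw; first by rewrite /parent nth_default //; lia.
case: (ltnP w 2) => hw2; first by case: w hw hw2 => [|[|]] // _ _; rewrite ?parent0 ?parent_root.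
have [[-> _ _]|[_ /andP [hr _] _]] := entry_cases (k := w) ltac:(lia) => //.
by rewrite size_takel in hr; lia.
Qed.

Lemma parent_node k : parent s k != 0 -> isnode s (parent s k) /\ bucket_of s k = k.
Proof.
move=> hp; have := parent_le_pred k; case: (ltnP (size s) k) => hk.
  by move: hp; rewrite /parent nth_default ?eqxx //; lia.
case: (ltnP k 2) => hk2; first by case: k hp hk hk2 => [|[|]] //; rewrite ?parent0 ?parent_root.
have [[hp0 _ _]|[hb hn _]] := entry_cases (k := k) ltac:(lia); first by rewrite hp0 in hp.
by split => //; exact: isnode_take hn.
Qed.

Lemma node_parent k : 2 <= k -> isnode s k -> parent s k != 0.
Proof.
move=> hk2 /andP [hk /eqP hb].
have [[_ /andP [hr _] _]|[_ /andP [hr _] _]] := entry_cases (k := k) ltac:(lia);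
  rewrite size_takel in hr; lia.
Qed.

Lemma iter_parent_le t w : iter t (parent s) w <= w.
Proof.
elim: t w => [|t IH] w //; rewrite iterSr.
by apply: leq_trans (IH _) _; have := parent_le_pred w; lia.
Qed.

Lemma iter_parent_0 t w : w <= t -> iter t (parent s) w = 0.
Proof.
elim: t w => [|t IH] w; first by case: w.
by move=> hw; rewrite iterSr; apply: IH; have := parent_le_pred w; lia.
Qed.

Lemma ancP u w : 0 < u -> w <= size s -> reflect (exists t, iter t (parent s) w = u) (anc s u w).
Proof.
move=> hu hw; apply: (iffP hasP) => [[t _ /eqP e]|[t e]]; exists t => //; last by rewrite e.
rewrite mem_iota /=; case: (ltnP t w) => ht; first lia.
by move: e; rewrite iter_parent_0 //; lia.
Qed.

Lemma nonnode_parent k : 0 < k <= size s -> ~~ isnode s k -> parent s k = 0.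
Proof.
move=> hk hn; apply/eqP; apply: contraNT hn => /parent_node [_ hb].
by rewrite /isnode hb eqxx andbT.
Qed.

Lemma anc_parent u w : 0 < u -> w <= size s ->
  anc s u w = (w == u) || anc s u (parent s w).
Proof.
move=> hu hw; have hp : parent s w <= size s by have := parent_le_pred w; lia.
apply/(ancP hu hw)/orP => [[[|t] e]|[/eqP <-|/(ancP hu hp) [t e]]].
- by left; apply/eqP.
- by right; apply/(ancP hu hp); exists t; rewrite -iterSr.
- by exists 0.
- by exists t.+1; rewrite iterSr.
Qed.

Lemma anc_le u w : 0 < u -> w <= size s -> anc s u w -> u <= w.
Proof. by move=> hu hw /(ancP hu hw) [t <-]; exact: iter_parent_le. Qed.

Lemma subtree_indicator B k : isnode s B -> 0 < k <= size s ->
  (isnode s k && anc s B k) = (k == B) + (isnode s (parent s k) && anc s B (parent s k)) :> nat.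
Proof.
move=> hB hk; have /andP [/andP [hB0 hBn] _] := hB.
have hp : parent s k <= size s by have := parent_le_pred k; lia.
case: (boolP (isnode s k)) => hkn /=.
- rewrite anc_parent; try lia; case: eqVneq => [eB|nB] /=.
    have /negbTE -> : ~~ anc s B (parent s k).
      by apply/negP => /anc_le; have := parent_le_pred k; lia.
    by rewrite andbF.
  case: (boolP (anc s B (parent s k))) => ha; rewrite ?andbF //.
  have /parent_node [-> _] // : parent s k != 0 by have := anc_le hB0 hp ha; lia.
- rewrite nonnode_parent // /isnode /=.
  by case: eqVneq hkn => // ->; rewrite hB.
Qed.

Lemma node_indicator k : 0 < k <= size s -> isnode s k = (k == 1) + isnode s (parent s k) :> nat.
Proof.
move=> hk; case: (boolP (isnode s k)) => hkn.
- case: (ltnP k 2) => hk2.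
    have -> : k = 1 by lia.
    by rewrite parent_root.
  have /parent_node [-> _] := node_parent hk2 hkn.
  by rewrite (_ : k == 1 = false) //; lia.
- rewrite nonnode_parent //; case: eqVneq hkn => // ->.
  by rewrite isnode_root.
Qed.

End Tree.

Lemma anc_take s i u w : wf_btree s -> 0 < u -> w <= i -> 0 < i <= size s ->
  anc (take i s) u w = anc s u w.
Proof.
move=> hwf hu hwi hi; have hwf' := wf_btree_take hwf hi.
have hw' : w <= size (take i s) by rewrite size_takel; lia.
have iter_take t v : v <= i -> iter t (parent (take i s)) v = iter t (parent s) v.
  elim: t v => [|t IH] v hv //.
  have hp : parent (take i s) v = parent s v by rewrite /parent nth_take //; lia.
  by rewrite !iterSr hp IH //; have := parent_le_pred hwf v; lia.
have hw : w <= size s by lia.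
apply/(ancP hwf' hu hw')/(ancP hwf hu hw) => -[t e];
  by exists t; rewrite ?iter_take // -?iter_take.
Qed.

Lemma anc_refl s u : anc s u u.
Proof. by rewrite /anc /= eqxx. Qed.

Lemma anc_step s j v : wf_btree s -> isnode s v -> 0 < j <= size s ->
  anc (step b s v) (bucket_of (step b s v) j) (bucket_of (step b s v) (size s).+1) =
  anc s (bucket_of s j) v.
Proof.
move=> hwf hv hj; have hwf' := wf_btree_step hwf hv; rewrite stepE in hwf' *.
have [hBj /andP [/andP [hB0 _] _]] := bucket_node hwf hj.
have /andP [/andP [hv0 hvn] _] := hv.
have hss : take (size s) (rcons s (new_entry b s v)) = s by rewrite -cats1 take_size_cat.
have anc_s u w : 0 < u -> w <= size s -> anc (rcons s (new_entry b s v)) u w = anc s u w.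
  move=> hu hw; rewrite -(anc_take hwf' hu hw) ?hss // size_rcons; lia.
have hlast : nth (0, 0) (rcons s (new_entry b s v)) (size s) = new_entry b s v.
  by rewrite nth_rcons ltnn eqxx.
have -> : bucket_of (rcons s (new_entry b s v)) j = bucket_of s j.
  by rewrite -cats1 bucket_of_cat.
rewrite {2}/bucket_of /= hlast; move: anc_s hwf'; rewrite /new_entry.
case: ifP => _ anc_s hwf' /=; first by apply: anc_s; lia.
rewrite (anc_parent hwf') ?size_rcons // /parent nth_rcons ltnn eqxx /= anc_s //.
by rewrite (_ : _ == _ = false) //; lia.
Qed.

End WellFormed.

Lemma count_labels (s : btree) (a : pred (nat * nat)) :
  count a s = count (fun k => a (nth (0, 0) s k.-1)) (iota 1 (size s)).
Proof.
rewrite -{1}[s]take_size -(map_nth_iota0 (0, 0) (leqnn (size s))) count_map.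
by rewrite (iotaDl 1 0) count_map.
Qed.

Lemma count_sum (T : Type) (a : pred T) (r : seq T) : count a r = \sum_(x <- r) a x.
Proof. by rewrite -sumn_count sumnE big_map. Qed.

Lemma sum_count_fibers (T I : eqType) (r : seq T) (ks : seq I)
    (f : I -> T) (Q : pred T) :
  uniq r -> {in ks, forall k, Q (f k) -> f k \in r} ->
  \sum_(v <- r | Q v) count (fun k => f k == v) ks = count (fun k => Q (f k)) ks.
Proof.
move=> ur; elim: ks => [|k ks IH] hks /=; first by rewrite big1.
rewrite big_split /= IH => [|x hx]; last by apply: hks; rewrite inE hx orbT.
congr (_ + _); rewrite -(big_filter _ (fun v => Q v)).
have -> : \sum_(v <- [seq v <- r | Q v]) (f k == v) = count_mem (f k) [seq v <- r | Q v].
  by rewrite -sum1_count [RHS]big_mkcond; apply: eq_bigr => v _; rewrite eq_sym /=; case: eqP.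
rewrite count_uniq_mem ?filter_uniq // mem_filter.
by case: (boolP (Q (f k))) => hQ; rewrite ?(hks k (mem_head _ _) hQ).
Qed.

Lemma cap_count (s : btree) v : cap s v = count (fun k => bucket_of s k == v) (iota 1 (size s)).
Proof. exact: count_labels. Qed.

Lemma outdeg_count (s : btree) v : outdeg s v = count (fun k => parent s k == v) (iota 1 (size s)).
Proof. exact: count_labels. Qed.

Section Counting.
Variable s : btree.
Variable P : pred nat.
Let nodeP v := isnode s v && P v.

Lemma sum_outdeg :
  \sum_(v <- iota 1 (size s) | nodeP v) outdeg s v = count (nodeP \o parent s) (iota 1 (size s)).
Proof.
under eq_bigr do rewrite outdeg_count.
apply: sum_count_fibers; first exact: iota_uniq.
by move=> k _ /andP [/andP [hp _] _]; rewrite mem_iota; lia.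
Qed.

Lemma sum_cap b : wf_btree b s ->
  \sum_(v <- iota 1 (size s) | nodeP v) cap s v = count (P \o bucket_of s) (iota 1 (size s)).
Proof.
move=> hwf; under eq_bigr do rewrite cap_count.
have node_bucket k : k \in iota 1 (size s) -> isnode s (bucket_of s k).
  by rewrite mem_iota => hk; apply: (proj2 (bucket_node hwf _)); lia.
rewrite sum_count_fibers ?iota_uniq //.
- by apply: eq_in_count => k /node_bucket; rewrite /nodeP /= => ->.
- by move=> k /node_bucket /andP [hk _] _; rewrite mem_iota; lia.
Qed.

End Counting.

Section Weights.
Variables (R : realFieldType) (fam : tfamily R).
Local Open Scope ring_scope.

Definition weight (c o : nat) : R :=
  match fam with
  | BRT => c%:R
  | DARY d => (d.-1 * c).+1%:R - o%:R
  | PORT a => o%:R + (a + 1) * c%:R - 1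
  end.

Definition total_weight (n : nat) : R :=
  match fam with
  | BRT => n%:R
  | DARY d => (d.-1 * n).+1%:R
  | PORT a => (a + 1) * n%:R - 1
  end.

Lemma pwE s v : pw fam s v =
  if isnode s v then weight (cap s v) (outdeg s v) / total_weight (size s) else 0.
Proof. by rewrite /pw /weight /total_weight; case: fam. Qed.

Lemma cond_formulaE l y i : cond_formula fam l y i = weight (l.-1 + y) 0 / total_weight i.
Proof. by rewrite /cond_formula /weight /total_weight; case: fam => *; rewrite ?subr0 ?add0r. Qed.

Lemma weight_total n : weight n 0 = total_weight n.
Proof. by rewrite /weight /total_weight; case: fam => *; rewrite ?subr0 ?add0r. Qed.

Lemma total_weight_neq0 n : tfamily_ok fam -> (0 < n)%N -> total_weight n != 0.
Proof.
rewrite /total_weight /tfamily_ok; case: fam => [|d|a] /= ha hn; rewrite ?pnatr_eq0 -?lt0n //.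
have hn1 : 1 <= n%:R :> R by rewrite ler1n.
have : 0 < a * n%:R by apply: mulr_gt0 => //; lra.
by move=> han; apply: lt0r_neq0; rewrite mulrDl mul1r; lra.
Qed.

Lemma sum_weight (I : Type) (r : seq I) (Q : pred I) (c o : I -> nat) :
  count Q r = (\sum_(v <- r | Q v) o v).+1 ->
  \sum_(v <- r | Q v) weight (c v) (o v) = weight (\sum_(v <- r | Q v) c v) 0.
Proof.
have sum1 : \sum_(v <- r | Q v) (1 : R) = (count Q r)%:R by rewrite -sum1_count natr_sum.
rewrite /weight; case: fam => [|d|a] hQ; first by rewrite natr_sum.
- have E v : (d.-1 * c v).+1%:R - (o v)%:R = 1 + d.-1%:R * (c v)%:R - (o v)%:R :> R.
    by rewrite mulrS natrM.
  rewrite (eq_bigr _ (fun v _ => E v)) sumrB big_split /= sum1 hQ -mulr_sumr -!natr_sum.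
  by rewrite !mulrS natrM; ring.
- by rewrite sumrB big_split /= sum1 hQ -mulr_sumr -!natr_sum mulrS; ring.
Qed.

End Weights.

Section Mass.
Variables (R : realFieldType) (fam : tfamily R) (b : nat) (s : btree).
Hypothesis hwf : wf_btree b s.
Local Open Scope ring_scope.

(* On nodes, the hypothesis makes P the indicator of the subtree rooted at B;
   the out-degrees in the weights then telescope to the single root term. *)
Lemma subtree_mass B (P : pred nat) : isnode s B ->
  {in iota 1 (size s), forall k, (isnode s k && P k)
     = (k == B) + (isnode s (parent s k) && P (parent s k)) :> nat}%N ->
  \sum_(v <- iota 1 (size s)) pw fam s v * (P v)%:R
    = weight fam (count (P \o bucket_of s) (iota 1 (size s))) 0 / total_weight fam (size s).
Proof.
move=> hB hP; set nodeP := fun v => isnode s v && P v.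
have count_nodes : count nodeP (iota 1 (size s))
    = (\sum_(v <- iota 1 (size s) | nodeP v) outdeg s v).+1.
  rewrite sum_outdeg !count_sum (eq_big_seq (fun k => (k == B) + nodeP (parent s k))%N hP).
  rewrite big_split /= -count_sum.
  rewrite count_uniq_mem ?iota_uniq // mem_iota.
  by have /andP [/andP [hB0 hBn] _] := hB; rewrite add1n hB0 ltnS hBn.
rewrite -(sum_cap _ hwf) -(sum_weight _ _ count_nodes) mulr_suml [RHS]big_mkcond /=.
apply: eq_bigr => v _; rewrite pwE /nodeP.
by case: (isnode s v); case: (P v); rewrite ?mulr1 ?mulr0 ?mul0r.
Qed.

Lemma pw_sum1 : tfamily_ok fam ->
  \sum_(v <- iota 1 (size s)) pw fam s v = 1.
Proof.
move=> hfam; have := subtree_mass (P := predT) (isnode_root hwf).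
rewrite count_predT size_iota weight_total divff ?total_weight_neq0 //; last first.
  by case: hwf.
under eq_bigr do rewrite mulr1; apply => k; rewrite mem_iota => hk.
by rewrite !andbT; apply: (node_indicator hwf); lia.
Qed.

Lemma descendant_mass j : (0 < j <= size s)%N ->
  \sum_(v <- iota 1 (size s)) pw fam s v *
    (anc (step b s v) (bucket_of (step b s v) j) (bucket_of (step b s v) (size s).+1))%:R
  = weight fam (count (fun k => anc s (bucket_of s j) (bucket_of s k)) (iota 1 (size s))) 0
    / total_weight fam (size s).
Proof.
move=> hj; have [_ hB] := bucket_node hwf hj.
rewrite -(subtree_mass hB) => [|k]; last first.
  by rewrite mem_iota => hk; apply: (subtree_indicator hwf); lia.
apply: eq_bigr => v _; case: (boolP (isnode s v)) => hv; first by rewrite anc_step.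
by rewrite pwE (negbTE hv) !mul0r.
Qed.

End Mass.

Section Saturation.
Variables (b : nat) (s : btree).
Hypothesis hwf : wf_btree b s.

(* Induction along the parent chain: a bucket w < j hanging directly below
   B = bucket_of s j was created while B was saturated, so j could neither join
   B afterwards nor have created it. *)
Lemma anc_bucket_before j w : 0 < j <= size s -> w < j ->
  anc s (bucket_of s j) w -> w = bucket_of s j.
Proof.
move=> hj; have [hBj /andP [/andP [hB0 hBn] _]] := bucket_node hwf hj.
elim/ltn_ind: w => w IH hwj.
rewrite (anc_parent hwf) ?hB0 //; last lia.
case/orP => [/eqP //|ha]; exfalso.
have hpw := parent_le_pred hwf w.
have hp : parent s w <= size s by lia.
have hBp := anc_le hwf hB0 hp ha.
have epB : parent s w = bucket_of s j by apply: IH => //; lia.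
have [[hp0 _ _]|[_ _ hsat]] := entry_cases hwf (k := w) ltac:(lia); first lia.
rewrite epB in hsat.
have [[_ _ hunsat]|[hbj _ _]] := entry_cases hwf (k := j) ltac:(lia); last lia.
have hwj' : w.-1 <= j.-1 by lia.
by have := cap_take_mono s (bucket_of s j) hwj'; lia.
Qed.

Lemma count_descendants_split j : 0 < j <= size s ->
  count (fun k => anc s (bucket_of s j) (bucket_of s k)) (iota 1 (size s)) =
  (count (fun k => bucket_of s k == bucket_of s j) (iota 1 j)).-1
  + count (fun k => anc s (bucket_of s j) (bucket_of s k)) (iota j ((size s).+1 - j)).
Proof.
move=> hj.
have -> : iota 1 (size s) = iota 1 j.-1 ++ iota j ((size s).+1 - j).
  by rewrite -{1}(_ : j.-1 + ((size s).+1 - j) = size s) ?iotaD; [congr (_ ++ iota _ _) | ]; lia.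
have -> : iota 1 j = rcons (iota 1 j.-1) j.
  by rewrite -cats1 -{1}(_ : j.-1 + 1 = j) ?iotaD; [congr (_ ++ [:: _]) | ]; lia.
rewrite -cats1 !count_cat /= eqxx addn0 addn1 /=; congr (_ + _).
apply: eq_in_count => k; rewrite mem_iota => hk.
have [hbk _] := bucket_node hwf (k := k) ltac:(lia).
apply/idP/eqP => [ha|->]; last exact: anc_refl.
by apply: (anc_bucket_before hj) => //; lia.
Qed.

End Saturation.

Section Observables.
Variable b : nat.

Lemma tree_at_build h : tree_at b h (size h).+1 = build b h.
Proof. by rewrite /tree_at take_size. Qed.

Lemma tree_at_take h i : 0 < i <= (size h).+1 -> tree_at b h i = take i (build b h).
Proof. by move=> hi; rewrite /tree_at -take_build; [congr take | ]; lia. Qed.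

Lemma K_build h j : 0 < j <= (size h).+1 ->
  K b j h = count (fun k => bucket_of (build b h) k == bucket_of (build b h) j) (iota 1 j).
Proof.
move=> hj; rewrite /K tree_at_take // cap_count size_takel ?size_build //; last lia.
rewrite bucket_of_take; last lia.
by apply: eq_in_count => k; rewrite mem_iota => hk; rewrite bucket_of_take //; lia.
Qed.

Lemma K_rcons h v j : j <= (size h).+1 -> K b j (rcons h v) = K b j h.
Proof. by move=> hj; rewrite /K /tree_at -cats1 takel_cat //; lia. Qed.

Lemma Y_rcons h v j : Y b (size h).+1 j (rcons h v) = Y b (size h).+1 j h.
Proof. by rewrite /Y /tree_at /= -cats1 take_size_cat // take_size. Qed.

Lemma A_rcons h v j : j <= (size h).+2 ->
  (A b (size h).+2 j (rcons h v) == 1) =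
  anc (step b (build b h) v) (bucket_of (step b (build b h) v) j)
      (bucket_of (step b (build b h) v) (size h).+2).
Proof.
by move=> hj; rewrite /A /tree_at /= take_oversize ?size_rcons // build_rcons hj; case: anc.
Qed.

Lemma Y_sum_A (R : realFieldType) (fam : tfamily R) h j :
  hprob b fam h != 0%R -> 0 < j <= (size h).+1 ->
  Y b (size h).+1 j h = \sum_(j <= i < (size h).+2) A b i j h.
Proof.
move=> hp hj; have hwf := wf_btree_build hp; have hs := size_build b h.
have [_ /andP [/andP [hB0 _] _]] := bucket_node hwf (k := j) ltac:(lia).
rewrite /Y tree_at_build count_sum; apply: eq_big_seq => i; rewrite mem_iota => hi.
have [hbi _] := bucket_node hwf (k := i) ltac:(lia).
have hji : j <= i by lia.
rewrite /A tree_at_take ?hji /=; last lia.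
by rewrite !bucket_of_take ?(anc_take hwf); lia.
Qed.

Local Open Scope ring_scope.

Lemma descendant_step_prob (R : realFieldType) (fam : tfamily R) h j :
  hprob b fam h != 0 -> (0 < j <= (size h).+1)%N ->
  \sum_(v <- iota 1 (size h).+1) pw fam (build b h) v * (A b (size h).+2 j (rcons h v) == 1%N)%:R
  = cond_formula fam (K b j h) (Y b (size h).+1 j h) (size h).+1.
Proof.
move=> hp hj; have hwf := wf_btree_build hp; have hs := size_build b h.
have hj2 : (j <= (size h).+2)%N by lia.
under eq_bigr do rewrite (A_rcons _ hj2).
rewrite cond_formulaE K_build // /Y tree_at_build -hs -(count_descendants_split hwf); last lia.
by rewrite -(descendant_mass fam hwf); last lia.
Qed.

Lemma conditional_step_prob (R : realFieldType) (fam : tfamily R) h j l y :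
  tfamily_ok fam -> hprob b fam h != 0 -> (0 < j <= (size h).+1)%N ->
  \sum_(v <- iota 1 (size h).+1) pw fam (build b h) v *
    ([&& K b j (rcons h v) == l, Y b (size h).+1 j (rcons h v) == y
       & A b (size h).+2 j (rcons h v) == 1%N])%:R
  = cond_formula fam l y (size h).+1 *
    \sum_(v <- iota 1 (size h).+1) pw fam (build b h) v *
      ((K b j (rcons h v) == l) && (Y b (size h).+1 j (rcons h v) == y))%:R.
Proof.
move=> hfam hp hj; have hjh : (j <= (size h).+1)%N by lia.
under eq_bigr do rewrite K_rcons ?Y_rcons // andbA.
under [in RHS]eq_bigr do rewrite K_rcons ?Y_rcons //.
case: (boolP ((K b j h == l) && (Y b (size h).+1 j h == y))) => [/andP [/eqP <- /eqP <-]|_].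
  have hsum := pw_sum1 (wf_btree_build hp) hfam; rewrite size_build in hsum.
  under eq_bigr do rewrite andTb.
  under [in RHS]eq_bigr do rewrite mulr1.
  by rewrite hsum mulr1 descendant_step_prob.
by rewrite !big1 ?mulr0 // => v _; rewrite ?andFb mulr0.
Qed.

End Observables.

Local Open Scope ring_scope.

Theorem mainTheorem6 (R : realFieldType) (b : nat) (fam : tfamily R)
  (j l : nat) :
  (1 <= b)%N -> tfamily_ok fam -> (1 <= j)%N -> (1 <= l <= b)%N ->
  0 < Pr b fam j.-1 (fun h => K b j h == l) ->
  (* almost surely under the conditioning K_j = l *)
  (forall n h, (j <= n)%N -> h \in hist n.-1 -> 0 < hprob b fam h ->
     K b j h = l ->
     A b j j h = 1%N /\ Y b n j h = (\sum_(j <= i < n.+1) A b i j h)%N) /\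
  (* P{A_{i+1,l,j} = 1 | Y_{i,l,j} = y} *)
  (forall i y, (j <= i)%N ->
     0 < Pr b fam i (fun h => (K b j h == l) && (Y b i j h == y)) ->
     Pr b fam i (fun h => [&& K b j h == l, Y b i j h == y & A b i.+1 j h == 1%N])
     / Pr b fam i (fun h => (K b j h == l) && (Y b i j h == y))
     = cond_formula fam l y i).
Proof.
move=> _ hfam hj _ _; split=> [n h hjn /hist_size hs /lt0r_neq0 hp _|].
  split; first by rewrite /A leqnn anc_refl.
  have -> : n = (size h).+1 by lia.
  by apply: Y_sum_A hp _; rewrite hs; lia.
move=> [|m] y hjm hpos; first lia.
rewrite -[RHS](mulfK (lt0r_neq0 hpos)); congr (_ / _).
rewrite !Pr_rcons mulr_sumr; apply: eq_big_seq => h /hist_size hs.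
case: (eqVneq (hprob b fam h) 0) => [->|hp]; first by rewrite !mul0r mulr0.
by rewrite mulrCA -hs conditional_step_prob // hs; lia.
Qed.
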